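(* Let $\tfrac12\le\gamma$ and $a=\tfrac12$. Let $\overline{F}_0\ge0$ be a function of $(s,\rho)$, $s\in\mathbb{R}$, $\rho\ge0$, and for $t\ge0$, $r>0$ define $$\overline{\phi}(t,r)=\frac4r\int_{t+r}^\infty\int_{t-r}^{t+r}\rho\,\overline{F}_0(s,\rho)\,d\eta\,d\xi,\qquad s=\frac{\xi+\eta}2,\ \rho=\frac{\xi-\eta}2.$$ Suppose that for all $(\xi,\eta)$ with $|\eta|\le\xi$, $$\rho\,\overline{F}_0(s,\rho)\le\frac{1}{\langle\xi\rangle\langle\eta\rangle^{2+2\gamma}}\chi_{\xi^a<\eta<\xi/2}.$$ Then $\overline{\phi}(t,r)\lesssim\langle t+r\rangle^{-2}$.
   Context: $\langle x\rangle=(1+x^2)^{1/2}$, $\chi_A$ denotes the indicator function of the set $A$, and $\lesssim$ means bounded by a constant multiple independent of $t,r$. *)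

From HB Require Import structures.
From mathcomp Require Import all_boot all_order all_algebra.
From mathcomp Require Import all_classical all_reals all_analysis.
Set Implicit Arguments. Unset Strict Implicit. Unset Printing Implicit Defensive.
Import Order.TTheory GRing.Theory Num.Theory.
Import numFieldNormedType.Exports.
Local Open Scope classical_set_scope.
Local Open Scope ring_scope.

Definition jbr {R : realType} (x : R) : R := Num.sqrt (1 + x ^+ 2).

Definition aexp {R : realType} : R := 2^-1.

Definition phibar {R : realType} (F0 : R -> R -> R) (t r : R) : \bar R :=
  let D1 : set R := `[t + r, +oo[%classic in
  let D2 : set R := `[t - r, t + r]%classic in
  let g (xi eta : R) : R := ((xi - eta) / 2) * F0 ((xi + eta) / 2) ((xi - eta) / 2) in
  ((4 / r)%:E *
   \int[@lebesgue_measure R]_(xi in D1)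
     \int[@lebesgue_measure R]_(eta in D2) (g xi eta)%:E)%E.

From HB Require Import structures.
From mathcomp Require Import all_boot all_order all_algebra.
From mathcomp Require Import all_classical all_reals all_analysis.
From mathcomp Require Import ring lra.
Import Order.TTheory GRing.Theory Num.Theory.
Import numFieldNormedType.Exports.
Local Open Scope classical_set_scope.
Local Open Scope ring_scope.

(* On its support sqrt xi < eta <= T := t + r <= xi, the integrand rho F0(s, rho)
   is at most 1/(xi eta^3), because gamma >= 1/2 gives <eta>^(2 + 2 gamma) >= eta^3;
   in particular it vanishes unless T > 1.  Integrating over eta > sqrt xi bounds
   the inner integral by 1/(2 xi^2), hence phibar <= 2/(r T), which suffices when
   T < 4 r.  When 4 r <= T, the eta-window [t - r, T] has length 2 r and lies in
   [T/2, T], and eta^2 > xi bounds the integrand by 2/(T xi^2), hence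
   phibar <= 16/T^2.  Finally 16/T^2 <= 32/<T>^2 for T > 1. *)

(* The comparison is made on the simple functions below [f1], so no measurability
   is needed. *)
Lemma ge0_le_integral_support d (T : measurableType d) (R : realType)
    (mu : {measure set T -> \bar R}) (D1 D2 : set T) (f1 f2 : T -> \bar R) :
  (forall x, D1 x -> (0 <= f1 x)%E) -> (forall x, D2 x -> (0 <= f2 x)%E) ->
  (forall x, D1 x -> f1 x = 0%E \/ D2 x /\ (f1 x <= f2 x)%E) ->
  (\int[mu]_(x in D1) f1 x <= \int[mu]_(x in D2) f2 x)%E.
Proof.
move=> f1_ge0 f2_ge0 f12.
rewrite (ge0_integralE _ f1_ge0) (ge0_integralE _ f2_ge0).
apply: ereal_sup_le => _ [h /= h_le <-]; exists h => //= x.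
apply: le_trans (h_le x) _; rewrite /patch.
case: ifPn => [/[1!inE] /f12 [->|[D2x le12]]|_].
- by case: ifPn => // /[1!inE] /f2_ge0.
- by rewrite ifT ?inE.
- by case: ifPn => // /[1!inE] /f2_ge0.
Qed.

Lemma integral_itv_cst {R : realType} (c u v : R) : u <= v ->
  (\int[@lebesgue_measure R]_(x in `[u, v]) c%:E = (c * (v - u))%:E)%E.
Proof.
move=> uv; rewrite integral_cst//= lebesgue_measure_itv/= lte_fin.
have [_|] := ltP u v; first by rewrite -EFinB -EFinM.
by move=> vu; rewrite (@le_anti _ _ v u) ?uv ?vu// subrr mulr0 mule0.
Qed.

Lemma cvgy_exprS {R : realType} (k : nat) : (x ^+ k.+1 : R) @[x --> +oo] --> +oo.
Proof.
apply/cvgryPge => M; near=> x.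
rewrite (@le_trans _ _ x)// ler_eXnr//.
all: near: x; exact: nbhs_pinfty_ge.
Unshelve. all: end_near. Qed.

Lemma is_derive_inv_exprS {R : realType} (c : R) (k : nat) (x : R) : x != 0 ->
  is_derive x 1 (fun y : R => - (c / k.+1%:R) / y ^+ k.+1) (c / x ^+ k.+2).
Proof.
move=> x0.
have xk0 : (@id R ^+ k.+1) x != 0 by rewrite exprfctE expf_neq0.
have dX : is_derive x 1 (@id R ^+ k.+1) ((k.+1%:R * x ^+ k) *: 1) by exact: is_deriveX.
rewrite (_ : (fun y => _) = - (c / k.+1%:R) \*: (fun y => ((@id R ^+ k.+1) y)^-1)); last first.
  by apply/funext => y; rewrite /GRing.scale/= exprfctE.
apply: is_derive_eq (is_deriveZ _ (is_deriveV xk0 dX)) _.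
rewrite /GRing.scale/= mulr1 exprfctE /= !exprS.
by field; rewrite expf_neq0 // x0 nat1r pnatr_eq0.
Qed.

Lemma integral_itvy_inv_exprSS {R : realType} (a c : R) (k : nat) : 0 < a -> 0 <= c ->
  (\int[@lebesgue_measure R]_(x in `[a, +oo[) (c / x ^+ k.+2)%:E
     = (c / (k.+1%:R * a ^+ k.+1))%:E)%E.
Proof.
move=> a_gt0 c_ge0.
set F := fun y : R => - (c / k.+1%:R) / y ^+ k.+1.
have dF (x : R) : 0 < x -> is_derive x 1 F (c / x ^+ k.+2).
  by move=> x_gt0; apply: is_derive_inv_exprS; rewrite gt_eqF.
rewrite (_ : c / _ = 0 - F a); last by rewrite /F; field; rewrite expf_neq0 ?gt_eqF.
rewrite EFinB; apply: ge0_continuous_FTC2y.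
- by move=> x ax; rewrite divr_ge0 // exprn_ge0 // (le_trans (ltW a_gt0) ax).
- apply: continuous_in_subspaceT => x; rewrite inE /= in_itv /= andbT => ax.
  have x0 : x != 0 by rewrite gt_eqF // (lt_le_trans a_gt0 ax).
  apply: (@continuousM _ _ (fun=> c) (fun y : R => (y ^+ k.+2)^-1)); first exact: cvg_cst.
  apply: continuousV; first by rewrite expf_neq0.
  exact/differentiable_continuous/derivable1_diffP/exprn_derivable.
- have xk_gt0 : \forall x \near +oo, 0 < x ^+ k.+1 :> R.
    by near=> x; rewrite exprn_gt0 //; near: x; apply: nbhs_pinfty_gt.
  rewrite -(mulr0 (- (c / k.+1%:R))); apply: cvgMl_tmp.
  exact/(gtr0_cvgV0 xk_gt0)/cvgy_exprS.
- by move=> x ax; case: (dF x (lt_trans a_gt0 ax)).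
- apply/cvg_at_right_filter/differentiable_continuous/derivable1_diffP.
  by case: (dF a a_gt0).
- move=> x; rewrite in_itv /= andbT => ax.
  by rewrite derive1E; case: (dF x (lt_trans a_gt0 ax)).
Unshelve. all: end_near. Qed.

Lemma jbr_ge_norm {R : realType} (x : R) : `|x| <= jbr x.
Proof. by rewrite /jbr -sqrtr_sqr ler_sqrt ?lerDr // addr_ge0 // sqr_ge0. Qed.

Lemma jbr_ge1 {R : realType} (x : R) : 1 <= jbr x.
Proof.
by rewrite /jbr -[X in X <= _]sqrtr1 ler_sqrt ?lerDl ?sqr_ge0 // addr_ge0 // sqr_ge0.
Qed.

Lemma jbr_sqr {R : realType} (x : R) : jbr x ^+ 2 = 1 + x ^+ 2.
Proof. by rewrite /jbr sqr_sqrtr // addr_ge0 // sqr_ge0. Qed.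

Definition rhoF0 {R : realType} (F0 : R -> R -> R) (xi eta : R) : R :=
  ((xi - eta) / 2) * F0 ((xi + eta) / 2) ((xi - eta) / 2).

Lemma phibarE {R : realType} (F0 : R -> R -> R) (t r : R) :
  phibar F0 t r = ((4 / r)%:E *
    \int[@lebesgue_measure R]_(xi in `[(t + r)%R, +oo[)
      \int[@lebesgue_measure R]_(eta in `[(t - r)%R, (t + r)%R]) (rhoF0 F0 xi eta)%:E)%E.
Proof. by []. Qed.

Section PhibarBound.
Context {R : realType} {gamma : R} {F0 : R -> R -> R}.
Hypothesis gamma_ge : 2^-1 <= gamma.
Hypothesis F0_ge0 : forall s rho, 0 <= rho -> 0 <= F0 s rho.
Hypothesis rhoF0_le : forall xi eta : R, `|eta| <= xi ->
  rhoF0 F0 xi eta <= (jbr xi * jbr eta `^ (2 + 2 * gamma))^-1 *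
                     \1_[set e : R | xi `^ aexp < e < xi / 2] eta.

Lemma rhoF0_ge0 xi eta : eta <= xi -> 0 <= rhoF0 F0 xi eta.
Proof.
move=> eta_le; have rho_ge0 : 0 <= (xi - eta) / 2 by rewrite divr_ge0 // subr_ge0.
by rewrite /rhoF0 mulr_ge0 ?F0_ge0.
Qed.

Lemma jbr_powR_ge_expr3 (eta : R) : 0 < eta -> eta ^+ 3 <= jbr eta `^ (2 + 2 * gamma).
Proof.
move=> eta_gt0; have jbr_ge1 := jbr_ge1 eta.
apply: (@le_trans _ _ (jbr eta `^ 3)); last (apply: ler_powR => //; have := gamma_ge; lra).
rewrite powR_mulrn ?(le_trans ler01) // lerXn2r ?nnegrE ?(ltW eta_gt0) ?(le_trans ler01) //.
exact: le_trans (ler_norm _) (jbr_ge_norm _).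
Qed.

Lemma rhoF0_support {xi eta : R} : 0 < xi -> `|eta| <= xi ->
  rhoF0 F0 xi eta = 0 \/ Num.sqrt xi < eta /\ rhoF0 F0 xi eta <= (xi * eta ^+ 3)^-1.
Proof.
move=> xi_gt0 eta_le; have := rhoF0_le xi eta eta_le.
have rho_ge0 : 0 <= rhoF0 F0 xi eta by apply/rhoF0_ge0/(le_trans (ler_norm eta)).
rewrite indicE; case: (boolP (eta \in _)) => [|_]; last first.
  by rewrite mulr0 => rho_le0; left; apply/le_anti; rewrite rho_le0 rho_ge0.
rewrite inE /= /aexp powR12_sqrt ?(ltW xi_gt0) // mulr1 => /andP[sqrt_lt _] rho_le.
right; split => //; apply: le_trans rho_le _.
have eta_gt0 : 0 < eta by rewrite (le_lt_trans (sqrtr_ge0 xi)).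
have jbr_gt0 (x : R) : 0 < jbr x by rewrite (lt_le_trans _ (jbr_ge1 _)).
rewrite lef_pV2 ?posrE ?mulr_gt0 ?exprn_gt0 ?powR_gt0 //.
apply: ler_pM; rewrite ?(ltW xi_gt0) ?exprn_ge0 ?(ltW eta_gt0) ?jbr_powR_ge_expr3 //.
exact: le_trans (ler_norm _) (jbr_ge_norm _).
Qed.

Context {t r : R}.
Hypotheses (t_ge0 : 0 <= t) (r_gt0 : 0 < r).
Local Notation T := (t + r).
Local Notation inner xi :=
  (\int[@lebesgue_measure R]_(eta in `[(t - r)%R, T]) (rhoF0 F0 xi eta)%:E)%E.

Let T_gt0 : 0 < T. Proof. by move: t_ge0 r_gt0; lra. Qed.

Lemma window_le {xi eta : R} : T <= xi -> t - r <= eta <= T -> 0 < xi /\ `|eta| <= xi.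
Proof.
move=> T_le /andP[? ?]; split; first exact: lt_le_trans T_gt0 T_le.
by rewrite ler_norml; move: t_ge0 r_gt0; lra.
Qed.

Lemma rhoF0_window_ge0 {xi eta : R} : T <= xi -> t - r <= eta <= T ->
  (0 <= (rhoF0 F0 xi eta)%:E)%E.
Proof.
move=> T_le /(window_le T_le)[_ eta_le].
by rewrite lee_fin rhoF0_ge0 // (le_trans (ler_norm eta)).
Qed.

Lemma inner_ge0 xi : T <= xi -> (0 <= inner xi)%E.
Proof.
move=> T_le; apply: integral_ge0 => eta; rewrite /= in_itv /=.
exact: rhoF0_window_ge0.
Qed.

Lemma inner_eq0 xi : T <= 1 -> T <= xi -> inner xi = 0%E.
Proof.
move=> T_le1 T_le; apply: integral0_eq => eta; rewrite /= in_itv /= => eta_in.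
have [xi_gt0 eta_le] := window_le T_le eta_in.
have [->//|[sqrt_lt _]] := rhoF0_support xi_gt0 eta_le.
move: eta_in => /andP[_ eta_le_T]; exfalso.
have sqrt_lt1 : Num.sqrt xi < 1 by lra.
have := sqr_sqrtr (ltW xi_gt0); have := sqrtr_ge0 xi; nra.
Qed.

Lemma inner_le_tail xi : T <= xi -> (inner xi <= (2^-1 / xi ^+ 2)%:E)%E.
Proof.
move=> T_le; have xi_gt0 := lt_le_trans T_gt0 T_le.
have sqrt_gt0 : 0 < Num.sqrt xi by rewrite sqrtr_gt0.
apply: (@le_trans _ _ (\int[@lebesgue_measure R]_(eta in `[Num.sqrt xi, +oo[)
                          (xi^-1 / eta ^+ 3)%:E)%E).
  apply: ge0_le_integral_support => eta.
  - by rewrite /= in_itv /=; exact: rhoF0_window_ge0.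
  - rewrite /= in_itv /= andbT => sqrt_le.
    by rewrite lee_fin divr_ge0 ?invr_ge0 ?exprn_ge0 ?(ltW xi_gt0) ?(le_trans (ltW sqrt_gt0)).
  - rewrite /= in_itv /= => /(window_le T_le)[_ eta_le].
    have [->|[sqrt_lt rho_le]] := rhoF0_support xi_gt0 eta_le; first by left.
    by right; rewrite in_itv /= andbT ltW // lee_fin -invfM.
rewrite integral_itvy_inv_exprSS ?invr_ge0 ?(ltW xi_gt0) // sqr_sqrtr ?(ltW xi_gt0) //.
by rewrite lee_fin [leLHS](_ : _ = 2^-1 / xi ^+ 2) //; field; rewrite gt_eqF.
Qed.

Lemma inner_le_narrow xi : 4 * r <= T -> T <= xi ->
  (inner xi <= ((4 * r / T) / xi ^+ 2)%:E)%E.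
Proof.
move=> r_small T_le; have xi_gt0 := lt_le_trans T_gt0 T_le.
apply: (@le_trans _ _ (\int[@lebesgue_measure R]_(eta in `[(t - r)%R, T])
                          ((xi * (xi * (T / 2)))^-1)%:E)%E).
  apply: ge0_le_integral_support => eta; rewrite /= in_itv /=.
  - exact: rhoF0_window_ge0.
  - by move=> _; rewrite lee_fin invr_ge0 !mulr_ge0 ?divr_ge0 ?ltW.
  move=> eta_in; have [_ eta_le] := window_le T_le eta_in.
  have [->|[sqrt_lt rho_le]] := rhoF0_support xi_gt0 eta_le; first by left.
  right; split => //; rewrite lee_fin (le_trans rho_le) //.
  have eta_ge : T / 2 <= eta by move: eta_in => /andP[? _]; lra.
  have xi_le : xi <= eta ^+ 2.
    rewrite -(sqr_sqrtr (ltW xi_gt0)) lerXn2r ?nnegrE ?sqrtr_ge0 ?ltW //.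
    by rewrite (le_lt_trans _ sqrt_lt) ?sqrtr_ge0.
  rewrite lef_pV2 ?posrE ?mulr_gt0 ?exprn_gt0 ?divr_gt0 ?(lt_le_trans _ eta_ge) ?divr_gt0 //.
  by rewrite ler_pM2l // exprSr ler_pM // ?(ltW xi_gt0) // divr_ge0 // ltW.
rewrite integral_itv_cst; last by move: r_gt0; lra.
by rewrite lee_fin [leLHS](_ : _ = 4 * r / T / xi ^+ 2) //; field; rewrite !gt_eqF.
Qed.

Lemma phibar_le_outer c : 0 <= c ->
    (forall xi, T <= xi -> (inner xi <= (c / xi ^+ 2)%:E)%E) ->
  (phibar F0 t r <= (4 / r * (c / T))%:E)%E.
Proof.
move=> c_ge0 inner_le.
rewrite phibarE (EFinM (4 / r)); apply: lee_wpmul2l; first by rewrite lee_fin divr_ge0 ?ltW.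
rewrite (_ : c / T = c / (0.+1%:R * T ^+ 0.+1)); last by rewrite expr1 mul1r.
rewrite -integral_itvy_inv_exprSS //.
apply: ge0_le_integral_support => xi; rewrite /= in_itv /= andbT => T_le.
- exact: inner_ge0.
- by rewrite lee_fin divr_ge0 ?sqr_ge0.
- by right; split => //; exact: inner_le.
Qed.

Lemma phibar_eq0 : T <= 1 -> phibar F0 t r = 0%E.
Proof.
move=> T_le1; rewrite phibarE integral0_eq ?mule0 // => xi.
by rewrite /= in_itv /= andbT; exact: inner_eq0.
Qed.

Lemma phibar_le : 1 < T -> (phibar F0 t r <= (16 / T ^+ 2)%:E)%E.
Proof.
move=> T_gt1; have [r_small|r_large] := lerP (4 * r) T.
  have c_ge0 : 0 <= 4 * r / T by rewrite divr_ge0 ?mulr_ge0 ?ltW.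
  apply: le_trans (phibar_le_outer _ c_ge0 (fun xi => inner_le_narrow xi r_small)) _.
  by rewrite lee_fin [leLHS](_ : _ = 16 / T ^+ 2) //; field; rewrite !gt_eqF.
have c_ge0 : 0 <= 2^-1 :> R by rewrite invr_ge0.
apply: le_trans (phibar_le_outer _ c_ge0 inner_le_tail) _.
rewrite lee_fin ler_pdivlMr ?exprn_gt0 //.
rewrite [leLHS](_ : _ = 2 * T / r); last by field; rewrite !gt_eqF.
by rewrite ler_pdivrMr //; lra.
Qed.

End PhibarBound.

Theorem lemmaA2 (R : realType) (gamma : R) (F0 : R -> R -> R) :
  2^-1 <= gamma ->
  measurable_fun [set: R * R] (fun p : R * R => F0 p.1 p.2) ->
  (forall s rho, 0 <= rho -> 0 <= F0 s rho) ->
  (forall xi eta : R, `|eta| <= xi ->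
     ((xi - eta) / 2) * F0 ((xi + eta) / 2) ((xi - eta) / 2) <=
     (jbr xi * jbr eta `^ (2 + 2 * gamma))^-1 *
     \1_[set e : R | xi `^ aexp < e < xi / 2] eta) ->
  exists C : R, forall t r : R, 0 <= t -> 0 < r ->
    (phibar F0 t r <= (C * (jbr (t + r))^-2)%:E)%E.
Proof.
move=> gamma_ge _ F0_ge0 rhoF0_le; exists 32 => t r t_ge0 r_gt0.
have [T_le1|T_gt1] := lerP (t + r) 1.
  rewrite (phibar_eq0 gamma_ge F0_ge0 rhoF0_le t_ge0 r_gt0 T_le1) lee_fin.
  by rewrite mulr_ge0 ?invr_ge0 ?exprn_ge0 ?(le_trans ler01 (jbr_ge1 _)).
apply: le_trans (phibar_le gamma_ge F0_ge0 rhoF0_le t_ge0 r_gt0 T_gt1) _.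
rewrite lee_fin jbr_sqr ler_pdivrMr ?exprn_gt0 ?(lt_trans ltr01) //.
rewrite mulrAC ler_pdivlMr ?ltr_wpDr ?sqr_ge0 //; nra.
Qed.
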